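(* Let $\mathfrak{X}=\mathfrak{X}_{(\Gamma_q,i_q)_q}$ be a Bourgain–Delbaen space, let $\Gamma'$ be a self-determined subset of $\Gamma$, let $\mathfrak{X}'=\mathfrak{X}_{(\Gamma'_{q_s},i'_{q_s})_s}$ be the Bourgain–Delbaen space determined by $\Gamma'$ (as described in the context), and let $Y$ be the closed linear span of $\{d_\gamma:\gamma\in\Gamma\setminus\Gamma'\}$. Then the restriction map $R:\ell_\infty(\Gamma)\to\ell_\infty(\Gamma')$ maps $\mathfrak{X}$ onto $\mathfrak{X}'$ and the kernel of $R|_{\mathfrak{X}}$ is $Y$. Hence $\mathfrak{X}/Y$ is isomorphic to $\mathfrak{X}'$.
   Context: Bourgain–Delbaen spaces: given a strictly increasing sequence $(\Gamma_q)_q$ of non-empty finite sets with union $\Gamma$ and linear extension operators $i_q:\ell_\infty(\Gamma_q)\to\ell_\infty(\Gamma)$ ($i_q(x)|_{\Gamma_q}=x$) with $\sup_q\|i_q\|<\infty$ that are compatible (for $p<q$, $i_p=i_q\circ r_q\circ i_p$, with $r_q$ restriction onto $\Gamma_q$), set $\Delta_1=\Gamma_1$, $\Delta_{q+1}=\Gamma_{q+1}\setminus\Gamma_q$, $d_\gamma=i_q(e_\gamma)$ for $\gamma\in\Delta_q$; $\mathfrak{X}_{(\Gamma_q,i_q)_q}$ is the closed span of $\{d_\gamma\}$ in $\ell_\infty(\Gamma)$. $e_\gamma^*$ denotes evaluation at $\gamma$ restricted to the space, $(d_\gamma^* )$ the functionals biorthogonal to $(d_\gamma)$. An infinite subset $\Gamma'\subseteq\Gamma$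 is self-determined if each $d_\gamma^*$, $\gamma\in\Gamma'$, lies in the linear span of $\{e_\eta^*:\eta\in\Gamma'\}$. For such $\Gamma'$: write $\{q:\Gamma'\cap\Delta_q\neq\varnothing\}=\{q_0<q_1<\cdots\}$, $\Gamma'_q=\Gamma'\cap\Gamma_q$, $R$ = restriction onto $\Gamma'$, and $i'_{q_s}:\ell_\infty(\Gamma'_{q_s})\to\ell_\infty(\Gamma')$, $i'_{q_s}(x)=R(i_{q_s}(x))$ ($x$ extended by zero to $\Gamma_{q_s}$). The sequence $(i'_{q_s})_s$ is a uniformly bounded compatible sequence of extension operators, so it defines the Bourgain–Delbaen space $\mathfrak{X}_{(\Gamma'_{q_s},i'_{q_s})_s}\subseteq\ell_\infty(\Gamma')$. *)

From mathcomp Require Import all_boot all_order all_algebra.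
From mathcomp Require Import all_classical all_reals.
Set Implicit Arguments. Unset Strict Implicit. Unset Printing Implicit Defensive.
Import Order.TTheory GRing.Theory Num.Theory.
Local Open Scope classical_set_scope.
Local Open Scope ring_scope.

Section BD.
Variables (R : realType) (T : Type).

(* extension by zero of f from D to T; also used for restriction operators *)
Definition zext (D : set T) (f : T -> R) : T -> R :=
  fun t => if t \in D then f t else 0.

Definition evec (g : T) : T -> R := fun t => if t \in [set g] then 1 else 0.

Definition normle (f : T -> R) (M : R) : Prop := forall t, `|f t| <= M.

Definition normle_on (D : set T) (f : T -> R) (M : R) : Prop :=
  forall t, D t -> `|f t| <= M.

Definition Delta (Gam : nat -> set T) (q : nat) : set T :=
  match q with
  | 0 => Gam 0
  | q'.+1 => Gam q'.+1 `\` Gam q'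
  end.

(* w is one of the vectors d_gamma = i_q(e_gamma), gamma in Delta_q, with
   gamma in P *)
Definition is_d (Gam : nat -> set T) (ext : nat -> (T -> R) -> (T -> R))
  (P : set T) (w : T -> R) : Prop :=
  exists g q, P g /\ Delta Gam q g /\ w = ext q (evec g).

Definition in_span Gam ext (P : set T) (v : T -> R) : Prop :=
  exists (n : nat) (a : 'I_n -> R) (w : 'I_n -> T -> R),
    (forall i, is_d Gam ext P (w i)) /\
    v = fun t => \sum_(i < n) a i * w i t.

Definition closed_span Gam ext (P : set T) (x : T -> R) : Prop :=
  forall e : R, 0 < e -> exists v, in_span Gam ext P v /\ normle (x \- v) e.

Definition BDspace Gam ext : set (T -> R) := closed_span Gam ext setT.

(* An operator i_q : l_inf(Gamma_q) -> l_inf(Gamma) is encoded as a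
   map (T -> R) -> (T -> R) depending only on the values on Gamma_q. *)
Definition BD_datum (Gam : nat -> set T) (ext : nat -> (T -> R) -> (T -> R))
  : Prop :=
  (forall q, finite_set (Gam q) /\ Gam q !=set0) /\
      (forall q, Gam q `<` Gam q.+1) /\
      \bigcup_q Gam q = setT /\
      (forall q x, ext q x = ext q (zext (Gam q) x)) /\
      (forall q (a : R) x y, ext q (fun t => a * x t + y t) =
                             (fun t => a * ext q x t + ext q y t)) /\
      (forall q x t, Gam q t -> ext q x t = x t) /\
      (exists C : R, forall q x M, normle_on (Gam q) x M ->
                        normle (ext q x) (C * M)) /\
      (forall p q x, (p < q)%N -> ext p x = ext q (zext (Gam q) (ext p x))).

Definition is_dstar Gam ext (g : T) (f : (T -> R) -> R) : Prop :=
  [/\ (forall (a : R) x y, BDspace Gam ext x -> BDspace Gam ext y ->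
         f (fun t => a * x t + y t) = a * f x + f y),
      (exists C : R, forall x M, BDspace Gam ext x -> normle x M ->
         `|f x| <= C * M) &
      (forall q eta, Delta Gam q eta ->
         f (ext q (evec eta)) = if eta \in [set g] then 1 else 0)].

Definition self_determined Gam ext (G' : set T) : Prop :=
  infinite_set G' /\
  forall g, G' g -> exists f, is_dstar Gam ext g f /\
    exists (n : nat) (a : 'I_n -> R) (eta : 'I_n -> T),
      (forall i, G' (eta i)) /\
      forall x, BDspace Gam ext x -> f x = \sum_(i < n) a i * x (eta i).

Definition enumerates_q (Gam : nat -> set T) (G' : set T) (qs : nat -> nat)
  : Prop :=
  (forall s, (qs s < qs s.+1)%N) /\
  (forall q, (exists g, G' g /\ Delta Gam q g) <-> exists s, qs s = q).

Definition Gam' (Gam : nat -> set T) (G' : set T) (qs : nat -> nat) :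
  nat -> set T := fun s => G' `&` Gam (qs s).

(* i'_{q_s}(x) = R(i_{q_s}(x extended by zero to Gamma_{q_s})); elements of
   l_inf(Gamma') are encoded as functions on T vanishing off Gamma'. *)
Definition ext' (ext : nat -> (T -> R) -> (T -> R)) (Gam : nat -> set T)
  (G' : set T) (qs : nat -> nat) : nat -> (T -> R) -> (T -> R) :=
  fun s x => zext G' (ext (qs s) (zext (Gam' Gam G' qs s) x)).

End BD.

From mathcomp Require Import all_boot all_order all_algebra.
From mathcomp Require Import all_classical all_reals.
From mathcomp Require Import ring lra.
Set Implicit Arguments.
Unset Strict Implicit.
Unset Printing Implicit Defensive.
Import Order.TTheory GRing.Theory Num.Theory.
Local Open Scope classical_set_scope.
Local Open Scope ring_scope.

(** The functional [d_g^*] is [h |-> h g - i_(q-1)(h|Gamma_(q-1)) g] for [g]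
    in [Delta_q], and self-determination says that for [g] in [Gamma'] it only
    reads coordinates in [Gamma'].  Hence, by induction on levels, every [d_g]
    with [g] outside [Gamma'] vanishes on [Gamma']: [R] kills [Y] and sends the
    remaining [d_g] to the basis vectors of [X'].  Conversely, if [v] is spanned
    by the [d_g] of level at most [q], then
    [v = i_q(v 1_Gamma') + i_q(v 1_(Gamma \ Gamma'))], and the second summand
    lies in [Y] because its [d_u^*]-coefficients with [u] in [Gamma'] only read
    coordinates where it vanishes.  So [i_q(v 1_Gamma')] is a lift of [R v] of
    norm at most [C |R v|], congruent to [v] modulo [Y].  Lifting the increments
    of a fast approximating sequence gives surjectivity, and the same lifts give
    the kernel and the bound on the quotient norm. *)

Section Generic.
Variables (R : realType) (T : Type).
Implicit Types (D : set T) (f h : T -> R) (g : T).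

Lemma zext_in D f t : D t -> zext D f t = f t.
Proof. by move=> Dt; rewrite /zext mem_set. Qed.

Lemma zext_out D f t : ~ D t -> zext D f t = 0.
Proof. by move=> Dt; rewrite /zext memNset. Qed.

Lemma zext0 D : zext D (fun=> 0) = (fun=> 0) :> (T -> R).
Proof. by apply/funext => t; rewrite /zext; case: ifP. Qed.

Lemma zext_lin D a f h :
  zext D (fun t => a * f t + h t) = fun t => a * zext D f t + zext D h t.
Proof. by apply/funext => t; rewrite /zext; case: ifP; rewrite ?mulr0 ?addr0. Qed.

Lemma zextD D f h : zext D (f \+ h) = zext D f \+ zext D h.
Proof. by apply/funext => t; rewrite /zext /=; case: ifP; rewrite ?addr0. Qed.

Lemma zextB D f h : zext D (f \- h) = zext D f \- zext D h.
Proof. by apply/funext => t; rewrite /zext /=; case: ifP; rewrite ?subr0. Qed.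

Lemma zext_split D f : zext D f \+ zext (~` D) f = f.
Proof.
apply/funext => t /=; have [Dt | nDt] := pselect (D t).
  by rewrite zext_in // zext_out ?addr0.
by rewrite zext_out // zext_in ?add0r.
Qed.

Lemma normle_zext D f M : normle f M -> normle (zext D f) M.
Proof.
move=> fM t; rewrite /zext; case: ifP => _; first exact: fM.
by rewrite normr0; apply: le_trans (fM t).
Qed.

Lemma evec_id g : evec R g g = 1.
Proof. by rewrite /evec mem_set. Qed.

Lemma evec_neq g t : t <> g -> evec R g t = 0.
Proof. by move=> tg; rewrite /evec memNset. Qed.

Lemma evecC g t : evec R g t = evec R t g.
Proof.
have [-> // | tg] := pselect (t = g).
by rewrite !evec_neq // => gt; apply: tg.
Qed.

End Generic.

Section RealLimits.
Variable R : realType.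

Lemma eq0_norm_le (r : R) : (forall e, 0 < e -> `|r| <= e) -> r = 0.
Proof.
move=> small; apply/eqP; rewrite -normr_le0; apply/ler_addgt0Pr => e e0.
by rewrite add0r; exact: small.
Qed.

Lemma pow2N_gt0 n : 0 < (2 : R) ^- n.
Proof. by rewrite invr_gt0 exprn_gt0. Qed.

Lemma pow2NS n : (2 : R) ^- n.+1 = 2 ^- n / 2.
Proof. by rewrite exprS invfM mulrC. Qed.

Lemma pow2N_small (K e : R) : 0 < e -> exists n, K * 2 ^- n <= e.
Proof.
move=> e0; have K1 : 0 < `|K| + 1 by rewrite ltr_wpDl.
pose n := Num.bound ((`|K| + 1) / e).
have n_gt : (`|K| + 1) / e < 2 ^+ n.
  apply: lt_le_trans (archi_boundP _) _; first by rewrite ltW ?divr_gt0.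
  by rewrite -natrX ler_nat ltnW // ltn_expl.
exists n; have p0 := pow2N_gt0 n.
apply: (@le_trans _ _ ((`|K| + 1) * 2 ^- n)).
  by rewrite ler_pM2r //; apply: le_trans (ler_norm K) _; rewrite lerDl.
rewrite ler_pdivrMr ?exprn_gt0 // mulrC; rewrite ltr_pdivrMr // in n_gt.
exact: ltW.
Qed.

Lemma approx_unique (a b K K' : R) (u : nat -> R) :
  (forall n, `|a - u n| <= K * 2 ^- n) -> (forall n, `|b - u n| <= K' * 2 ^- n) ->
  a = b.
Proof.
move=> au bu; apply/eqP; rewrite -subr_eq0; apply/eqP/eq0_norm_le => e e0.
have [n small] := pow2N_small (K + K') e0.
have := ler_normB (a - u n) (b - u n); rewrite opprB addrA subrK.
have := au n; have := bu n; rewrite mulrDl in small; lra.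
Qed.

(* [u k - r k] increases, [u k + r k] decreases, and every term of the first
   lies below every term of the second. *)
Lemma telescoping_sup (u r : nat -> R) :
  (forall n, 0 <= r n) -> (forall n, `|u n.+1 - u n| <= r n - r n.+1) ->
  forall n, `|sup (range (fun k => u k - r k)) - u n| <= r n.
Proof.
move=> r_ge0 du n.
have lo_up : {homo (fun k => u k - r k) : i j / (i <= j)%N >-> i <= j}.
  apply: homo_leq => [//|y x z|k]; first exact: le_trans.
  by have := du k; rewrite ler_norml => /andP[]; lra.
have hi_dn : {homo (fun k => u k + r k) : i j / (i <= j)%N >-> j <= i}.
  apply: homo_leq => [//|y x z xy yz|k]; first exact: le_trans yz xy.
  by have := du k; rewrite ler_norml => /andP[]; lra.
have lo_hi k m : u k - r k <= u m + r m.
  apply: le_trans (lo_up k (maxn k m) (leq_maxl _ _)) _.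
  apply: le_trans (hi_dn m (maxn k m) (leq_maxr _ _)).
  by have := r_ge0 (maxn k m); lra.
have ne : range (fun k => u k - r k) !=set0 by exists (u 0%N - r 0%N), 0%N.
have lo_le : u n - r n <= sup (range (fun k => u k - r k)).
  apply: sup_upper_bound; last by exists n.
  by split => //; exists (u 0%N + r 0%N) => _ [m _ <-].
have le_hi : sup (range (fun k => u k - r k)) <= u n + r n.
  by apply: ge_sup => // _ [m _ <-].
by rewrite ler_norml; apply/andP; split; lra.
Qed.

Lemma uniform_limit (T : Type) (S : nat -> T -> R) (K : R) : 0 <= K ->
  (forall n, normle (S n.+1 \- S n) (K * 2 ^- n - K * 2 ^- n.+1)) ->
  exists x, forall n, normle (x \- S n) (K * 2 ^- n).
Proof.
move=> K0 dS; exists (fun t => sup (range (fun k => S k t - K * 2 ^- k))).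
move=> n t; apply: (telescoping_sup (u := S^~ t)) => [k|k]; last exact: dS.
by rewrite mulr_ge0 // ltW ?pow2N_gt0.
Qed.

End RealLimits.

Section Span.
Variables (R : realType) (T : Type).
Variables (Gam : nat -> set T) (ext : nat -> (T -> R) -> (T -> R)).
Implicit Types (P : set T) (v w : T -> R).

Lemma in_span0 P : in_span Gam ext P (fun=> 0).
Proof.
exists 0%N, (fun=> 0), (fun=> fun=> 0); split; first by case.
by apply/funext => t; rewrite big_ord0.
Qed.

Lemma in_span_cons P a w v : is_d Gam ext P w -> in_span Gam ext P v ->
  in_span Gam ext P (fun t => a * w t + v t).
Proof.
move=> dw [n [b [u [du ->]]]].
exists n.+1, (fun i => if unlift ord0 i is Some j then b j else a),
  (fun i => if unlift ord0 i is Some j then u j else w); split.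
  by move=> i; case: unliftP.
apply/funext => t; rewrite big_ord_recl /= unlift_none; congr (_ + _).
by apply: eq_bigr => i _; rewrite liftK.
Qed.

Lemma in_span_gen P w : is_d Gam ext P w -> in_span Gam ext P w.
Proof.
move=> dw; have := in_span_cons 1 dw (in_span0 P).
by congr in_span; apply/funext => t; rewrite mul1r addr0.
Qed.

Lemma in_span_ind P (Q : (T -> R) -> Prop) : Q (fun=> 0) ->
  (forall a w v, is_d Gam ext P w -> in_span Gam ext P v -> Q v ->
     Q (fun t => a * w t + v t)) ->
  forall v, in_span Gam ext P v -> Q v.
Proof.
move=> Q0 Qcons v [n [a [w [dw ->]]]].
elim: n a w dw => [|n IH] a w dw.
  by rewrite (_ : (fun t => _) = fun=> 0) //; apply/funext => t; rewrite big_ord0.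
pose a' i := a (lift ord0 i); pose w' i := w (lift ord0 i).
rewrite (_ : (fun t => _) =
             fun t => a ord0 * w ord0 t + \sum_(i < n) a' i * w' i t); last first.
  by apply/funext => t; rewrite big_ord_recl.
have dw' i : is_d Gam ext P (w' i) by exact: dw.
apply: Qcons; [exact: dw | by exists n, a', w' | exact: IH].
Qed.

Lemma in_span_lin P a v w : in_span Gam ext P v -> in_span Gam ext P w ->
  in_span Gam ext P (fun t => a * v t + w t).
Proof.
move=> + Pw; elim/in_span_ind => [|b u v' du _ IH].
  by rewrite (_ : (fun t => _) = w) //; apply/funext => t; rewrite mulr0 add0r.
rewrite (_ : (fun t => _) = fun t => (a * b) * u t + (a * v' t + w t)).
  exact: in_span_cons.
by apply/funext => t; rewrite mulrDr mulrA addrA.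
Qed.

Lemma in_spanD P v w : in_span Gam ext P v -> in_span Gam ext P w ->
  in_span Gam ext P (v \+ w).
Proof.
move=> Pv /(in_span_lin 1 Pv); congr in_span.
by apply/funext => t; rewrite mul1r.
Qed.

Lemma in_spanB P v w : in_span Gam ext P v -> in_span Gam ext P w ->
  in_span Gam ext P (v \- w).
Proof.
move=> Pv Pw; have := in_span_lin (-1) Pw Pv; congr in_span.
by apply/funext => t; rewrite mulN1r addrC.
Qed.

Lemma in_span_sum P (I : eqType) (s : seq I) (c : I -> R) (w : I -> T -> R) :
  (forall i, i \in s -> is_d Gam ext P (w i)) ->
  in_span Gam ext P (fun t => \sum_(i <- s) c i * w i t).
Proof.
elim: s => [_|i s IH dw].
  have -> : (fun t => \sum_(i <- [::]) c i * w i t) = fun=> 0.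
    by apply/funext => t; rewrite big_nil.
  exact: in_span0.
have -> : (fun t => \sum_(j <- i :: s) c j * w j t) =
          fun t => c i * w i t + \sum_(j <- s) c j * w j t.
  by apply/funext => t; rewrite big_cons.
apply: in_span_cons; first by apply: dw; rewrite mem_head.
by apply: IH => j js; apply: dw; rewrite in_cons js orbT.
Qed.

Lemma in_span_sub P P' v : P `<=` P' -> in_span Gam ext P v -> in_span Gam ext P' v.
Proof.
move=> PP' [n [a [w [dw ->]]]]; exists n, a, w; split => // i.
by have [g [q [Pg [Dg ->]]]] := dw i; exists g, q; split => //; apply: PP'.
Qed.

Lemma closed_span_of_span P v : in_span Gam ext P v -> closed_span Gam ext P v.
Proof. by move=> Pv e e0; exists v; split => // t; rewrite /= subrr normr0 ltW. Qed.

Lemma closed_span_sub P P' x : P `<=` P' ->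
  closed_span Gam ext P x -> closed_span Gam ext P' x.
Proof.
move=> PP' Px e e0; have [v [Pv xv]] := Px e e0.
by exists v; split => //; apply: in_span_sub Pv.
Qed.

Lemma closed_span_approx P (S : nat -> T -> R) x (K : R) :
  (forall n, in_span Gam ext P (S n)) -> (forall n, normle (x \- S n) (K * 2 ^- n)) ->
  closed_span Gam ext P x.
Proof.
move=> PS xS e e0; have [n small] := pow2N_small K e0.
by exists (S n); split => // t; apply: le_trans (xS n t) small.
Qed.

End Span.

Lemma DeltaP (T : Type) (Gam : nat -> set T) (A : set T) (L : T -> nat) :
  (forall q t, Gam q t <-> A t /\ (L t <= q)%N) ->
  forall q t, Delta Gam q t <-> A t /\ L t = q.
Proof.
move=> GamP [|q] t /=.
  rewrite GamP; split => -[At Lt]; split => //; last by rewrite Lt.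
  by apply/eqP; rewrite -leqn0.
rewrite /setD /= !GamP; split => [[[At Lt] Ltq] | [At ->]].
  split => //; apply/eqP; rewrite eqn_leq Lt ltnNge; apply/negP => Lq.
  exact: Ltq.
by split => // -[_]; rewrite ltnn.
Qed.

Section BourgainDelbaen.
Variables (R : realType) (T : choiceType).
Variables (Gam : nat -> set T) (ext : nat -> (T -> R) -> (T -> R)).
Hypothesis BD : BD_datum Gam ext.

Lemma Gam_finite q : finite_set (Gam q).
Proof. by case: BD => /(_ q) []. Qed.

Lemma Gam_neq0 q : Gam q !=set0.
Proof. by case: BD => /(_ q) []. Qed.

Lemma Gam_proper q : Gam q `<` Gam q.+1.
Proof. by case: BD => _ []. Qed.

Lemma Gam_cover : \bigcup_q Gam q = setT.
Proof. by case: BD => _ [_ []]. Qed.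

Lemma ext_zext q x : ext q x = ext q (zext (Gam q) x).
Proof. by case: BD => _ [_ [_ []]]. Qed.

Lemma ext_lin q a x y :
  ext q (fun t => a * x t + y t) = fun t => a * ext q x t + ext q y t.
Proof. by case: BD => _ [_ [_ [_ []]]]. Qed.

Lemma ext_id q x t : Gam q t -> ext q x t = x t.
Proof. by case: BD => _ [_ [_ [_ [_ [/(_ q x t)]]]]]. Qed.

Lemma ext_bounded : exists C : R, forall q x M,
  normle_on (Gam q) x M -> normle (ext q x) (C * M).
Proof. by case: BD => _ [_ [_ [_ [_ [_ []]]]]]. Qed.

Lemma ext_compat p q x : (p < q)%N -> ext p x = ext q (zext (Gam q) (ext p x)).
Proof. by case: BD => _ [_ [_ [_ [_ [_ [_ /(_ p q x)]]]]]]. Qed.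

Lemma ext_eq_on q x y : (forall t, Gam q t -> x t = y t) -> ext q x = ext q y.
Proof.
move=> xy; rewrite ext_zext [RHS]ext_zext; congr ext; apply/funext => t.
have [Gt|nGt] := pselect (Gam q t); last by rewrite !zext_out.
by rewrite !zext_in // xy.
Qed.

Lemma ext0 q : ext q (fun=> 0) = fun=> 0.
Proof.
have := ext_lin q (-1) (fun=> 0) (fun=> 0).
rewrite (_ : (fun t => _) = fun=> 0); last by apply/funext => t; rewrite mulr0 addr0.
by move=> ->; apply/funext => t; rewrite mulN1r addNr.
Qed.

Lemma extD q x y : ext q (x \+ y) = ext q x \+ ext q y.
Proof.
have := ext_lin q 1 x y; rewrite (_ : (fun t => _) = x \+ y).
  by move=> ->; apply/funext => t; rewrite mul1r.
by apply/funext => t; rewrite mul1r.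
Qed.

Lemma ext_sum q (I : Type) (s : seq I) (c : I -> R) (f : I -> T -> R) :
  ext q (fun t => \sum_(i <- s) c i * f i t) =
  fun t => \sum_(i <- s) c i * ext q (f i) t.
Proof.
elim: s => [|i s IH].
  rewrite (_ : (fun t => _) = fun=> 0); last by apply/funext => t; rewrite big_nil.
  by rewrite ext0; apply/funext => t; rewrite big_nil.
rewrite (_ : (fun t => _) = fun t => c i * f i t + \sum_(j <- s) c j * f j t).
  by rewrite ext_lin IH; apply/funext => t; rewrite big_cons.
by apply/funext => t; rewrite big_cons.
Qed.

Lemma ext_ext p q x : (p <= q)%N -> ext q (ext p x) = ext p x.
Proof.
rewrite leq_eqVlt => /orP[/eqP <-|pq]; last by rewrite [RHS](ext_compat _ pq) -ext_zext.
by apply: ext_eq_on => t Gt; rewrite ext_id.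
Qed.

Lemma Gam_mono p q : (p <= q)%N -> Gam p `<=` Gam q.
Proof.
move: p q; apply: (homo_leq (r := fun A B => A `<=` B)) => [A|B A C AB BC|k].
- exact: subset_refl.
- exact: subset_trans AB BC.
- exact: properW (Gam_proper k).
Qed.

Lemma lev_ex t : exists q, `[< Gam q t >].
Proof.
have : (\bigcup_q Gam q) t by rewrite Gam_cover.
by case=> q _ Gq; exists q; apply/asboolP.
Qed.

Definition lev t : nat := ex_minn (lev_ex t).

Lemma Gam_lev q t : Gam q t <-> (lev t <= q)%N.
Proof.
rewrite /lev; case: ex_minnP => m /asboolP Gm min_m.
by split => [/asboolP /min_m // | mq]; exact: Gam_mono mq _ Gm.
Qed.

Lemma Delta_lev q t : Delta Gam q t <-> lev t = q.
Proof.
have GamP q' t' : Gam q' t' <-> setT t' /\ (lev t' <= q')%N.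
  by rewrite Gam_lev; split => [|[]].
by apply: iff_trans (DeltaP GamP q t) _; split => [[]|].
Qed.

Definition d g : T -> R := ext (lev g) (evec R g).

Lemma is_dE P w : is_d Gam ext P w <-> exists2 g, P g & w = d g.
Proof.
split => [[g [q [Pg [/Delta_lev <- ->]]]] | [g Pg ->]]; first by exists g.
by exists g, (lev g); split => //; split => //; apply/Delta_lev.
Qed.

Lemma d_on g t : (lev t <= lev g)%N -> d g t = evec R g t.
Proof. by move=> tg; rewrite /d ext_id //; apply/Gam_lev. Qed.

Lemma Gam_seq_ex q : exists s : seq T, uniq s /\ forall t, Gam q t <-> t \in s.
Proof.
have /finite_seqP [s ->] := Gam_finite q.
by exists (undup s); split => [|t]; rewrite ?undup_uniq ?mem_undup.
Qed.

Definition Gam_seq q : seq T := projT1 (cid (Gam_seq_ex q)).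

Lemma Gam_seq_uniq q : uniq (Gam_seq q).
Proof. exact: (projT2 (cid (Gam_seq_ex q))).1. Qed.

Lemma Gam_seqP q t : Gam q t <-> t \in Gam_seq q.
Proof. exact: (projT2 (cid (Gam_seq_ex q))).2. Qed.

Lemma sum_evec (s : seq T) (F : T -> R) t : uniq s ->
  \sum_(u <- s) F u * evec R u t = if t \in s then F t else 0.
Proof.
move=> s_uniq; case: ifP => ts.
  rewrite (bigD1_seq t) // evec_id mulr1 big1 /= ?addr0 // => u ut.
  by rewrite evec_neq ?mulr0 // => tu; rewrite tu eqxx in ut.
rewrite big_seq big1 // => u us.
by rewrite evec_neq ?mulr0 // => tu; rewrite tu us in ts.
Qed.

Lemma ext_Gam_sum q x :
  ext q x = fun t => \sum_(u <- Gam_seq q) x u * ext q (evec R u) t.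
Proof.
rewrite ext_zext -ext_sum; congr ext; apply/funext => t.
rewrite sum_evec ?Gam_seq_uniq //; case: ifPn => [/Gam_seqP Gt | /negP Gt].
  by rewrite zext_in.
by rewrite zext_out // => /Gam_seqP.
Qed.

Lemma ext_Delta_sum q y : (forall u, Gam q u -> y u != 0 -> lev u = q) ->
  ext q y = fun t => \sum_(u <- Gam_seq q) y u * d u t.
Proof.
move=> y_Delta; rewrite ext_Gam_sum; apply/funext => t.
apply: eq_big_seq => u /Gam_seqP Gu.
by have [->|y0] := eqVneq (y u) 0; rewrite ?mul0r // /d y_Delta.
Qed.

Lemma in_span_Gam_seq q (c : T -> R) :
  in_span Gam ext (Gam q) (fun t => \sum_(u <- Gam_seq q) c u * d u t).
Proof. by apply: in_span_sum => u /Gam_seqP Gu; apply/is_dE; exists u. Qed.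

Lemma ext_span q x : in_span Gam ext (Gam q) (ext q x).
Proof.
elim: q x => [|q IH] x.
  rewrite ext_Delta_sum => [|u /Gam_lev]; first exact: in_span_Gam_seq.
  by rewrite leqn0 => /eqP.
have -> : ext q.+1 x = ext q x \+ ext q.+1 (x \- ext q x).
  have x_split : x = ext q x \+ (x \- ext q x).
    by apply/funext => t /=; rewrite addrC subrK.
  by rewrite {1}x_split extD ext_ext.
apply: in_spanD; first exact: in_span_sub (Gam_mono (leqnSn q)) (IH x).
rewrite ext_Delta_sum => [|u Gu]; first exact: in_span_Gam_seq.
have [Gqu|nGqu] := pselect (Gam q u); first by rewrite /= ext_id // subrr eqxx.
by move=> _; apply/(Delta_lev q.+1).
Qed.

Lemma ext_fix q v : in_span Gam ext (Gam q) v -> ext q v = v.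
Proof.
move=> vP; elim/in_span_ind: v / vP => [|a w v /is_dE[g Gg ->] _ IH]; first exact: ext0.
by rewrite ext_lin /d ext_ext ?IH //; apply/Gam_lev.
Qed.

Lemma span_level v : in_span Gam ext setT v -> exists q, in_span Gam ext (Gam q) v.
Proof.
move=> vP; elim/in_span_ind: v / vP => [|a w v /is_dE[g _ ->] _ [q vq]].
  by exists 0%N; exact: in_span0.
exists (maxn q (lev g)); apply: in_span_cons.
  by apply/is_dE; exists g => //; apply/Gam_lev; rewrite leq_maxr.
by apply: in_span_sub vq; apply: Gam_mono; rewrite leq_maxl.
Qed.

(* The paper's [d_g^*], extended to all of [T -> R]. *)
Definition dstar g (h : T -> R) : R :=
  h g - (if lev g is l.+1 then ext l h g else 0).

Lemma dstar_lin g a x y : dstar g (fun t => a * x t + y t) = a * dstar g x + dstar g y.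
Proof. by rewrite /dstar; case: (lev g) => [|l]; rewrite ?ext_lin /=; ring. Qed.

Lemma dstar0 g : dstar g (fun=> 0) = 0.
Proof. by rewrite /dstar; case: (lev g) => [|l]; rewrite ?ext0 subrr. Qed.

Lemma dstar_eq_on g h h' : (forall t, Gam (lev g) t -> h t = h' t) ->
  dstar g h = dstar g h'.
Proof.
move=> hh'; rewrite /dstar hh'; last exact/Gam_lev.
case E: (lev g) => [//|l]; rewrite (ext_eq_on (y := h')) // => t Gt.
by apply: hh'; rewrite E; exact: Gam_mono (leqnSn l) _ Gt.
Qed.

Lemma dstar_ext g q h : (lev g <= q)%N -> dstar g (ext q h) = dstar g h.
Proof.
move=> gq; apply: dstar_eq_on => t /Gam_lev tg.
by apply: ext_id; apply/Gam_lev; exact: leq_trans tg gq.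
Qed.

Lemma dstar_below g h : (forall t, (lev t < lev g)%N -> h t = 0) -> dstar g h = h g.
Proof.
move=> h0; rewrite /dstar; case E: (lev g) => [|l]; first by rewrite subr0.
rewrite (ext_eq_on (y := fun=> 0)) ?ext0 ?subr0 // => t /Gam_lev tl.
by apply: h0; rewrite E ltnS.
Qed.

Lemma dstar_d g u : dstar g (d u) = evec R g u.
Proof.
have [ug|gu] := ltnP (lev u) (lev g).
  rewrite evec_neq; last by move=> E; move: ug; rewrite E ltnn.
  by rewrite /dstar; move: ug; case: (lev g) => [//|l] ul; rewrite /d ext_ext ?subrr.
rewrite dstar_below; first by rewrite d_on // evecC.
move=> t tg; rewrite d_on; last exact: ltnW (leq_trans tg gu).
by apply: evec_neq => E; move: tg; rewrite E ltnNge gu.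
Qed.

Lemma d_BD g : BDspace Gam ext (d g).
Proof. by apply/closed_span_of_span/in_span_gen/is_dE; exists g. Qed.

Lemma is_dstar_on_span g f v : is_dstar Gam ext g f -> in_span Gam ext setT v ->
  f v = dstar g v.
Proof.
case=> f_lin _ f_d vP; elim/in_span_ind: v / vP => [|a w v /is_dE[u _ ->] v_span IH].
  have X0 : BDspace Gam ext (fun=> 0) by apply/closed_span_of_span/in_span0.
  have := f_lin (-1) _ _ X0 X0; rewrite dstar0.
  rewrite (_ : (fun t => _) = fun=> 0); last by apply/funext => t; rewrite mulr0 addr0.
  by rewrite mulN1r addNr.
rewrite f_lin; [|exact: d_BD|exact: closed_span_of_span].
by rewrite IH dstar_lin dstar_d /d f_d //; apply/Delta_lev.
Qed.

Lemma span_expansion q v : in_span Gam ext (Gam q) v ->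
  v = fun t => \sum_(u <- Gam_seq q) dstar u v * d u t.
Proof.
move=> vP; elim/in_span_ind: v / vP => [|a w v /is_dE[g Gg ->] _ IH].
  by apply/funext => t; rewrite big1 // => u _; rewrite dstar0 mul0r.
apply/funext => t; rewrite {1}IH /=.
under [RHS]eq_bigr do rewrite dstar_lin dstar_d mulrDl.
rewrite big_split /=; congr (_ + _).
rewrite (eq_bigr (fun u => a * d u t * evec R u g)) => [|u _]; last by rewrite mulrAC.
by rewrite sum_evec ?Gam_seq_uniq // ifT //; apply/Gam_seqP.
Qed.

Definition ext_bound : R := projT1 (cid ext_bounded).

Lemma ext_boundP q x M : normle_on (Gam q) x M -> normle (ext q x) (ext_bound * M).
Proof. exact: (projT2 (cid ext_bounded)). Qed.

Lemma ext_bound_ge1 : 1 <= ext_bound.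
Proof.
have [t0 Gt0] := Gam_neq0 0.
have e_le1 : normle_on (Gam 0) (evec R t0) 1.
  by move=> t _; rewrite /evec; case: ifP; rewrite ?normr1 ?normr0.
by have := ext_boundP e_le1 t0; rewrite ext_id // evec_id normr1 mulr1.
Qed.

Section SelfDetermined.
Variable G' : set T.
Hypothesis SD : self_determined Gam ext G'.

(* [d_g^*] agrees with the given combination of evaluations on the range of
   [i_q] for large [q], and both only read coordinates in [Gamma_q]. *)
Lemma dstar_zext g h : G' g -> dstar g h = dstar g (zext G' h).
Proof.
move=> G'g; case: SD => _ /(_ g G'g) [f [f_dstar [n [a [eta [G'eta f_eval]]]]]].
pose q := maxn (lev g) (\max_(i < n) lev (eta i)).
have eta_q i : Gam q (eta i).
  apply/Gam_lev; apply: leq_trans (leq_maxr (lev g) _).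
  exact: (leq_bigmax (F := fun i => lev (eta i))).
suff dstar_eval k : dstar g k = \sum_(i < n) a i * k (eta i).
  by rewrite !dstar_eval; apply: eq_bigr => i _; rewrite zext_in.
have ext_k := in_span_sub (@subsetT _ (Gam q)) (ext_span q k).
rewrite -(dstar_ext k (leq_maxl _ _ : (lev g <= q)%N)) -(is_dstar_on_span f_dstar ext_k).
rewrite f_eval; last exact: closed_span_of_span.
by apply: eq_bigr => i _; rewrite ext_id.
Qed.

(* [0 = d_t^*(d_g) = d_t^*(R d_g)], and by induction on [lev t] the vector
   [R d_g] vanishes below the level of [t], where [d_t^*] is evaluation at [t]. *)
Lemma d_compl_vanish g t : ~ G' g -> G' t -> d g t = 0.
Proof.
move=> nG'g; have [n] := ubnP (lev t); elim: n t => // n IH t.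
rewrite ltnS => tn G't; rewrite -(zext_in (d g) G't) -dstar_below.
  by rewrite -dstar_zext // dstar_d evec_neq // => gt; apply: nG'g; rewrite gt.
move=> u ut; have [G'u|nG'u] := pselect (G' u); last by rewrite zext_out.
by rewrite zext_in // IH //; exact: leq_trans ut tn.
Qed.

Lemma zext_span_compl v : in_span Gam ext (~` G') v -> zext G' v = fun=> 0.
Proof.
move=> vP; elim/in_span_ind: v / vP => [|a w v /is_dE[g nG'g ->] _ IH].
  exact: zext0.
rewrite zext_lin IH; apply/funext => t; rewrite /zext.
by case: ifPn => [/set_mem G't|_]; rewrite ?d_compl_vanish // mulr0 addr0.
Qed.

Lemma zext_closed_span_compl y : closed_span Gam ext (~` G') y -> zext G' y = fun=> 0.
Proof.
move=> Yy; apply/funext => t; apply: eq0_norm_le => e e0.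
have [v [v_span yv]] := Yy e e0.
by have := normle_zext G' yv t; rewrite zextB (zext_span_compl v_span) /= subr0.
Qed.

Lemma ext_compl_span q z : in_span Gam ext (~` G') (ext q (zext (~` G') z)).
Proof.
set y := ext q (zext (~` G') z).
have dstar_G' u : Gam q u -> G' u -> dstar u y = 0.
  move=> Gu G'u; rewrite dstar_zext // (dstar_eq_on (h' := fun=> 0)) ?dstar0 // => t Gt.
  have Gqt : Gam q t := Gam_mono ((Gam_lev q u).1 Gu) Gt.
  have [G't|nG't] := pselect (G' t); last by rewrite zext_out.
  by rewrite zext_in // /y ext_id // zext_out // => /(_ G't).
rewrite (span_expansion (ext_span q _ : in_span Gam ext (Gam q) y)).
have -> : (fun t => \sum_(u <- Gam_seq q) dstar u y * d u t) =
    fun t => \sum_(u <- [seq u <- Gam_seq q | u \in ~` G']) dstar u y * d u t.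
  apply/funext => t; rewrite big_filter [RHS]big_mkcond.
  apply: eq_big_seq => u /Gam_seqP Gu; case: ifPn => // /negP nG'u.
  by rewrite dstar_G' ?mul0r //; apply: contrapT => /mem_set.
apply: in_span_sum => u; rewrite mem_filter => /andP[/set_mem nG'u _].
by apply/is_dE; exists u.
Qed.

Lemma zext_lift v : in_span Gam ext setT v -> exists w, [/\ in_span Gam ext setT w,
  zext G' w = zext G' v, in_span Gam ext (~` G') (v \- w) &
  forall M, normle (zext G' v) M -> normle w (ext_bound * M)].
Proof.
move=> /span_level [q vq].
have v_split : v = ext q (zext G' v) \+ ext q (zext (~` G') v).
  by rewrite -extD zext_split ext_fix.
exists (ext q (zext G' v)); split.
- exact: in_span_sub (ext_span q _).
- rewrite [in RHS]v_split zextD (zext_span_compl (ext_compl_span _ _)).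
  by apply/funext => t /=; rewrite addr0.
- rewrite [X in X \- _]v_split (_ : _ \- _ = ext q (zext (~` G') v)).
    exact: ext_compl_span.
  by apply/funext => t /=; rewrite addrC addKr.
- by move=> M vM; apply: ext_boundP => t _; exact: vM.
Qed.

Lemma quotient_bound x M : BDspace Gam ext x -> normle (zext G' x) M ->
  forall e, 0 < e -> exists y, in_span Gam ext (~` G') y /\
    normle (x \- y) (ext_bound * M + e).
Proof.
move=> Xx xM e e0; have C1 := ext_bound_ge1.
pose e' := e / (1 + ext_bound).
have e'0 : 0 < e' by rewrite divr_gt0 //; lra.
have e_split : e = e' + ext_bound * e'.
  by rewrite /e'; field; apply: lt0r_neq0; lra.
have [v [v_span xv]] := Xx e' e'0.
have [w [_ _ vw_span w_le]] := zext_lift v_span.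
exists (v \- w); split => // t /=.
have Rv : normle (zext G' v) (M + e').
  move=> u; have := xM u; have := normle_zext G' xv u; rewrite zextB /= => h1 h2.
  have := ler_normB (zext G' x u) (zext G' x u - zext G' v u).
  by rewrite opprB addrC subrK; lra.
have := w_le _ Rv t; have := xv t; rewrite /= mulrDr => h1 h2.
have -> : x t - (v t - w t) = (x t - v t) + w t by ring.
have := ler_normD (x t - v t) (w t); lra.
Qed.

Lemma zext_kernel x :
  (BDspace Gam ext x /\ zext G' x = fun=> 0) <-> closed_span Gam ext (~` G') x.
Proof.
split => [[Xx Rx] e e0 | Yx]; last first.
  by split; [exact: closed_span_sub Yx | exact: zext_closed_span_compl].
have [|y [y_span xy]] := quotient_bound (M := 0) Xx _ e0.
  by move=> t; rewrite Rx normr0.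
by exists y; rewrite mulr0 add0r in xy.
Qed.

Lemma zext_norm_le x y M : closed_span Gam ext (~` G') y -> normle (x \- y) M ->
  normle (zext G' x) M.
Proof.
move=> Yy /(normle_zext G'); rewrite zextB (zext_closed_span_compl Yy).
by move=> xM t; have := xM t; rewrite /= subr0.
Qed.

Lemma lift_increments (v : nat -> T -> R) y' :
  (forall k, in_span Gam ext setT (v k)) ->
  (forall k, normle (y' \- zext G' (v k)) (2 ^- k)) ->
  exists S : nat -> T -> R, [/\ forall n, in_span Gam ext setT (S n),
    forall n, zext G' (S n) = zext G' (v n) &
    forall n, normle (S n.+1 \- S n)
                     (4 * ext_bound * 2 ^- n - 4 * ext_bound * 2 ^- n.+1)].
Proof.
move=> v_span yv.
have /choice [w w_lift] : forall k, exists w, [/\ in_span Gam ext setT w,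
    zext G' w = zext G' (v k.+1 \- v k) & normle w (ext_bound * (2 * 2 ^- k))].
  move=> k; have dv_span := in_spanB (v_span k.+1) (v_span k).
  have [w [w_span Rw _ w_le]] := zext_lift dv_span.
  exists w; split => //; apply: w_le => t; rewrite zextB /=.
  have := yv k t; have := yv k.+1 t; rewrite /= pow2NS => h1 h2.
  have := ler_normB (y' t - zext G' (v k) t) (y' t - zext G' (v k.+1) t).
  rewrite opprB addrC addrA subrK; have := pow2N_gt0 R k; lra.
pose S n t := v 0%N t + \sum_(k < n) w k t.
have S_succ n : S n.+1 = S n \+ w n.
  by apply/funext => t; rewrite /S /= big_ord_recr addrA.
have S0 : S 0%N = v 0%N by apply/funext => t; rewrite /S big_ord0 addr0.
exists S; split.
- elim=> [|n IH]; first by rewrite S0.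
  by rewrite S_succ; apply: in_spanD IH _; case: (w_lift n).
- elim=> [|n IH]; first by rewrite S0.
  rewrite S_succ zextD IH; case: (w_lift n) => _ -> _; rewrite zextB.
  by apply/funext => t /=; rewrite addrC subrK.
- move=> n t; rewrite S_succ /= addrC addKr; case: (w_lift n) => _ _ /(_ t).
  by rewrite pow2NS; lra.
Qed.

Lemma zext_onto_of_dense y' :
  (forall e, 0 < e -> exists v, in_span Gam ext setT v /\ normle (y' \- zext G' v) e) ->
  exists x, BDspace Gam ext x /\ zext G' x = y'.
Proof.
move=> dense.
have /choice [v v_approx] : forall k, exists v,
    in_span Gam ext setT v /\ normle (y' \- zext G' v) (2 ^- k).
  by move=> k; exact: dense (pow2N_gt0 R k).
have [S [S_span RS dS]] :=
  lift_increments (fun k => (v_approx k).1) (fun k => (v_approx k).2).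
have [|x xS] := uniform_limit _ dS; first by have := ext_bound_ge1; lra.
exists x; split; first exact: closed_span_approx S_span xS.
apply/funext => t.
apply: (approx_unique (u := fun n => zext G' (S n) t) (K := 4 * ext_bound)
                      (K' := 1)) => n.
  by have := normle_zext G' (xS n) t; rewrite zextB.
by rewrite RS mul1r; exact: (v_approx n).2.
Qed.

Variable qs : nat -> nat.
Hypothesis QS : enumerates_q Gam G' qs.

Lemma qs_leq : {mono qs : m n / (m <= n)%N}.
Proof. by case: QS => qs_inc _; apply/leq_mono/(homo_ltn ltn_trans). Qed.

Lemma qs_lev g : G' g -> exists s, qs s = lev g.
Proof.
case: QS => _ /(_ (lev g)) [+ _] G'g; apply.
by exists g; split => //; apply/Delta_lev.
Qed.

Lemma Delta_Gam' s g : Delta (Gam' Gam G' qs) s g <-> G' g /\ lev g = qs s.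
Proof.
have /choice [L L_lev] : forall g, exists k, G' g -> qs k = lev g.
  move=> u; have [G'u|nG'u] := pselect (G' u); last by exists 0%N.
  by have [k <-] := qs_lev G'u; exists k.
have Gam'P k u : Gam' Gam G' qs k u <-> G' u /\ (L u <= k)%N.
  rewrite /Gam' /setI /=; split => -[G'u Hu]; split => //.
    by move/Gam_lev: Hu; rewrite -(L_lev u G'u) qs_leq.
  by apply/Gam_lev; rewrite -(L_lev u G'u) qs_leq.
apply: iff_trans (DeltaP Gam'P s g) _; split => -[G'g Lg]; split => //.
  by rewrite -Lg L_lev.
by apply: (incn_inj qs_leq); rewrite L_lev.
Qed.

Lemma ext'_evec s g : Delta (Gam' Gam G' qs) s g ->
  ext' ext Gam G' qs s (evec R g) = zext G' (d g).
Proof.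
move=> /Delta_Gam' [G'g lev_g]; rewrite /ext' /d lev_g; congr (zext _ (ext _ _)).
apply/funext => t; have [->|tg] := pselect (t = g).
  by rewrite zext_in //; split => //; apply/Gam_lev; rewrite lev_g.
by rewrite /zext evec_neq //; case: ifP.
Qed.

Lemma is_d'E w : is_d (Gam' Gam G' qs) (ext' ext Gam G' qs) setT w <->
  exists2 g, G' g & w = zext G' (d g).
Proof.
split => [[g [s [_ [Dg ->]]]] | [g G'g ->]].
  by exists g; [case/Delta_Gam': Dg | exact: ext'_evec].
have [s qs_g] := qs_lev G'g.
have Dg : Delta (Gam' Gam G' qs) s g by apply/Delta_Gam'.
by exists g, s; split => //; split => //; rewrite ext'_evec.
Qed.

Lemma zext_span v : in_span Gam ext setT v ->
  in_span (Gam' Gam G' qs) (ext' ext Gam G' qs) setT (zext G' v).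
Proof.
move=> vP; elim/in_span_ind: v / vP => [|a w v /is_dE[g _ ->] _ IH].
  by rewrite zext0; exact: in_span0.
rewrite zext_lin; have [G'g|nG'g] := pselect (G' g).
  by apply: in_span_cons IH; apply/is_d'E; exists g.
have dg_compl : in_span Gam ext (~` G') (d g) by apply/in_span_gen/is_dE; exists g.
rewrite (zext_span_compl dg_compl) (_ : (fun t => _) = zext G' v) //.
by apply/funext => t; rewrite mulr0 add0r.
Qed.

Lemma span'_lift v' : in_span (Gam' Gam G' qs) (ext' ext Gam G' qs) setT v' ->
  exists2 v, in_span Gam ext setT v & v' = zext G' v.
Proof.
move=> vP; elim/in_span_ind: v' / vP => [|a w' v' /is_d'E[g _ ->] _ [v v_span ->]].
  by exists (fun=> 0); [exact: in_span0 | rewrite zext0].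
exists (fun t => a * d g t + v t); last by rewrite zext_lin.
by apply: in_span_cons v_span; apply/is_dE; exists g.
Qed.

Lemma zext_BD x : BDspace Gam ext x ->
  BDspace (Gam' Gam G' qs) (ext' ext Gam G' qs) (zext G' x).
Proof.
move=> Xx e e0; have [v [v_span xv]] := Xx e e0.
exists (zext G' v); split; first exact: zext_span.
by rewrite -zextB; exact: normle_zext.
Qed.

Lemma zext_BD_onto y' : BDspace (Gam' Gam G' qs) (ext' ext Gam G' qs) y' ->
  exists x, BDspace Gam ext x /\ zext G' x = y'.
Proof.
move=> Xy'; apply: zext_onto_of_dense => e e0.
have [v' [v'_span yv']] := Xy' e e0; have [v v_span v'E] := span'_lift v'_span.
by exists v; rewrite -v'E.
Qed.

End SelfDetermined.
End BourgainDelbaen.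

Theorem proposition1p12 (R : realType) (T : Type)
  (Gam : nat -> set T) (ext : nat -> (T -> R) -> (T -> R))
  (G' : set T) (qs : nat -> nat) :
  BD_datum Gam ext ->
  self_determined Gam ext G' ->
  enumerates_q Gam G' qs ->
  let X := BDspace Gam ext in
  let X' := BDspace (Gam' Gam G' qs) (ext' ext Gam G' qs) in
  let Y := closed_span Gam ext (~` G') in
  let Rm := zext G' in
  (* R maps X onto X' *)
  (forall x, X x -> X' (Rm x)) /\
  (forall y, X' y -> exists x, X x /\ Rm x = y) /\
  (* the kernel of R restricted to X is Y *)
  (forall x, (X x /\ Rm x = (fun=> 0)) <-> Y x) /\
  (* hence the induced map X/Y -> X', [x] |-> R x, is an isomorphism:
     it is bounded (by 1) and bounded below w.r.t. the quotient norm *)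
  (forall x y M, X x -> Y y -> normle (x \- y) M -> normle (Rm x) M) /\
  (exists c : R, 0 < c /\ forall x M, X x -> normle (Rm x) M ->
     forall e : R, 0 < e -> exists y, Y y /\ normle (x \- y) (c * M + e)).
Proof.
move: Gam ext G' qs; elim/Pchoice: T => T Gam ext G' qs BD SD QS X X' Y Rm.
split; first exact: zext_BD.
split; first exact: zext_BD_onto.
split; first exact: zext_kernel.
split; first by move=> x y M _; exact: zext_norm_le.
exists (ext_bound BD); split; first by have := ext_bound_ge1 BD; lra.
move=> x M Xx xM e e0; have [y [y_span xy]] := quotient_bound BD SD Xx xM e0.
by exists y; split => //; exact: closed_span_of_span.
Qed.
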